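(* Consider the following slotted system. There are $N\ge2$ users and slots $t=1,\dots,T$. In each slot the BS schedules one user by a deterministic algorithm, whose choice in slot $t$ may depend on the adversary's actions before slot $t$. An adversary uses a blocking matrix $\sigma\in\{0,1\}^{N\times T}$, where $\sigma_i(t)=0$ means user $i$ is blocked in slot $t$. Feasibility means $\sum_{i,t}(1-\sigma_i(t))\le\alpha T$ and at most one user is blocked per slot, where $0<\alpha<1$ and $\alpha T\in\mathbb Z$. Ages satisfy $a_i(1)=1$, $a_i(t+1)=1$ if user $i$ is scheduled and not blocked in slot $t$, and $a_i(t+1)=a_i(t)+1$ otherwise. The average age is $\Delta=\frac1T\sum_{t=1}^T\frac1N\sum_i a_i(t)$. Then for every deterministic scheduling algorithm there exists a feasible blocking matrix under which $\Delta\ge\frac{T\alpha^2}{2}$. *)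

From mathcomp Require Import all_boot all_order all_algebra.
Set Implicit Arguments. Unset Strict Implicit. Unset Printing Implicit Defensive.
Import Order.TTheory GRing.Theory Num.Theory.

(* A blocking matrix: [sigma t i = false] iff user i is blocked in slot t
   (i.e. sigma_i(t) = 0).  Slots are t = 1..T; values outside are irrelevant. *)
Definition blocking (N : nat) := nat -> 'I_N -> bool.

(* A deterministic scheduling algorithm: in slot t it picks a user as a
   function of the (whole) blocking matrix, subject to causality below. *)
Definition scheduler (N : nat) := nat -> blocking N -> 'I_N.

Definition causal (N : nat) (A : scheduler N) : Prop :=
  forall (t : nat) (s1 s2 : blocking N),
    (forall s i, 1 <= s < t -> s1 s i = s2 s i) -> A t s1 = A t s2.

(* Feasibility: total number of blocked (user,slot) pairs over slots 1..T is
   at most alpha*T = k, and at most one user is blocked per slot. *)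
Definition feasible (N T k : nat) (sigma : blocking N) : Prop :=
  (\sum_(1 <= t < T.+1) \sum_(i < N) (~~ sigma t i : nat) <= k)%N /\
  (forall t, 1 <= t <= T -> \sum_(i < N) (~~ sigma t i : nat) <= 1)%N.

Fixpoint age (N : nat) (A : scheduler N) (sigma : blocking N) (i : 'I_N)
    (t : nat) : nat :=
  match t with
  | 0 => 1
  | t'.+1 =>
      if t' == 0 then 1
      else if (A t' sigma == i) && sigma t' i then 1
      else (age A sigma i t').+1
  end.

Local Open Scope ring_scope.

Definition avg_age (R : realFieldType) (N T : nat) (A : scheduler N)
    (sigma : blocking N) : R :=
  (T%:R)^-1 * \sum_(1 <= t < T.+1) ((N%:R)^-1 * \sum_(i < N) (age A sigma i t)%:R).

From mathcomp Require Import all_boot all_order all_algebra.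
From mathcomp Require Import ring.
Set Implicit Arguments. Unset Strict Implicit. Unset Printing Implicit Defensive.
Import Order.TTheory GRing.Theory Num.Theory.

(* The adversary spends its whole budget k = alpha T at the start: in each of
   the slots 1..k it blocks exactly the user the scheduler picks.  Then nobody
   is served before slot k + 1, every age equals t at slot t <= k + 1, and the
   first k slots alone contribute N (1 + ... + k) >= N k^2 / 2 to the total
   age, i.e. Delta >= k^2 / (2 T) = T alpha^2 / 2. *)

Section BlockScheduledUser.
Variables (N : nat) (A : scheduler N).

(* The choice of [A] depends on the blocking matrix itself, so the matrix is
   built slot by slot: slot n blocks the user that [A] picks against the
   matrix of slots 1..n-1; causality makes it the user [A] actually picks
   against the final matrix (block_scheduled_slot). *)
Fixpoint block_scheduled (n : nat) : blocking N :=
  match n with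
  | 0 => fun _ _ => true
  | n'.+1 => fun s i =>
      if s == n'.+1 then A n'.+1 (block_scheduled n') != i
      else block_scheduled n' s i
  end.

Lemma block_scheduled_outside n s i :
  (s == 0) || (n < s) -> block_scheduled n s i.
Proof.
elim: n => [//|n IHn] /= hs.
case: eqP => [es|_]; first by move: hs; rewrite es ltnn.
by apply: IHn; case/orP: hs => [->//|hs]; rewrite (ltn_trans _ hs) ?orbT.
Qed.

Lemma block_scheduled_stable n m s i :
  s <= n <= m -> block_scheduled m s i = block_scheduled n s i.
Proof.
case/andP=> hsn; elim: m => [|m IHm] hnm.
  by move: hnm; rewrite leqn0 => /eqP->.
case: (ltngtP n m.+1) hnm => // [hnm _|-> //].
rewrite /= IHm //; case: eqP => // esm.
by move: hnm; rewrite -esm ltnNge hsn.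
Qed.

Hypothesis causalA : causal A.

Lemma block_scheduled_slot k t i :
  0 < t <= k -> block_scheduled k t i = (A t (block_scheduled k) != i).
Proof.
case/andP=> ht htk.
have -> : A t (block_scheduled k) = A t (block_scheduled t.-1).
  apply: causalA => s j /andP[_ hst]; apply: block_scheduled_stable.
  by rewrite -ltnS prednK // hst (leq_trans (leq_pred t)).
rewrite (@block_scheduled_stable t) ?leqnn //.
by case: t ht {htk} => //= t _; rewrite eqxx.
Qed.

Lemma block_scheduled_count k t :
  \sum_(i < N) (~~ block_scheduled k t i : nat) = (0 < t <= k).
Proof.
case: (boolP (0 < t <= k)) => ht.
  rewrite (bigD1 (A t (block_scheduled k))) //= block_scheduled_slot // eqxx.
  rewrite big1 // => i hi.
  by rewrite block_scheduled_slot // eq_sym (negPf hi).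
rewrite big1 // => i _; rewrite block_scheduled_outside //.
by move: ht; rewrite negb_and -eqn0Ngt -ltnNge.
Qed.

Lemma feasible_block_scheduled T k : k <= T -> feasible T k (block_scheduled k).
Proof.
move=> hkT; split=> [|t _]; last by rewrite block_scheduled_count leq_b1.
under eq_bigr do rewrite block_scheduled_count.
rewrite (@big_cat_nat _ _ _ k.+1) //= ?ltnS //.
rewrite [X in _ + X]big_nat_cond [X in _ + X]big1 => [|t /andP[/andP[hkt _] _]].
  rewrite addn0 (eq_big_nat _ _ (F2 := fun=> 1%N)) => [|t /andP[-> ]].
    by rewrite sum_nat_const_nat muln1 subn1.
  by rewrite ltnS => ->.
by rewrite (leqNgt t k) hkt andbF.
Qed.

Lemma age_block_scheduled k i t :
  0 < t <= k.+1 -> age A (block_scheduled k) i t = t.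
Proof.
case: t => // t; rewrite ltnS /=.
elim: t => [//|t IHt] htk /=.
by rewrite block_scheduled_slot ?htk // andbN IHt // ltnW.
Qed.

End BlockScheduledUser.

Local Open Scope ring_scope.

Lemma avg_age_ge (R : realFieldType) N T m (A : scheduler N) sigma :
  (0 < N)%N -> (m <= T)%N ->
  (forall i t, (0 < t <= m)%N -> (t <= age A sigma i t)%N) ->
  'C(m.+1, 2)%:R / T%:R <= avg_age R T A sigma.
Proof.
move=> hN hmT hage; rewrite /avg_age mulrC ler_wpM2l ?invr_ge0 ?ler0n //.
have slot_ge t : (0 < t <= m)%N -> t%:R <= N%:R^-1 * \sum_(i < N) (age A sigma i t)%:R :> R.
  move=> ht; rewrite ler_pdivlMl ?ltr0n // -natr_sum -natrM ler_nat.
  by rewrite -[X in (X * _)%N]card_ord -sum_nat_const leq_sum // => i _; apply: hage.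
rewrite (@big_cat_nat _ _ _ m.+1) //= ?ltnS // -[X in X <= _]addr0 lerD //; last first.
  by apply: sumr_ge0 => t _; rewrite mulr_ge0 ?invr_ge0 ?ler0n ?sumr_ge0.
rewrite -bin2_sum big_ltn // add0n natr_sum.
by apply: ler_sum_nat => t /andP[ht htm]; apply: slot_ge; rewrite ht -ltnS.
Qed.

Lemma sqr_half_le_bin2 (R : realFieldType) k : (k * k)%:R / 2%:R <= 'C(k.+1, 2)%:R :> R.
Proof.
rewrite ler_pdivrMr ?ltr0n // -natrM ler_nat mulnC -mul_bin_diag bin1.
by rewrite leq_mul2r leqnSn orbT.
Qed.

Theorem lemma1 (R : realFieldType) (N T : nat) (alpha : R)
  (hN : (2 <= N)%N) (hT : (1 <= T)%N)
  (ha0 : 0 < alpha) (ha1 : alpha < 1)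
  (k : nat) (hk : alpha * T%:R = k%:R)
  (A : scheduler N) (hA : causal A) :
  exists sigma : blocking N,
    feasible T k sigma /\
    T%:R * alpha ^+ 2 / 2%:R <= avg_age R T A sigma.
Proof.
have hkT : (k <= T)%N.
  by rewrite -(ler_nat R) -hk ler_piMl ?ltr0n // ltW.
exists (block_scheduled A k); split; first exact: feasible_block_scheduled.
have -> : T%:R * alpha ^+ 2 / 2%:R = (k * k)%:R / 2%:R / T%:R.
  by rewrite natrM -hk; field; rewrite pnatr_eq0 -lt0n hT.
apply: le_trans (avg_age_ge _ _ hkT _).
- by rewrite ler_wpM2r ?invr_ge0 ?ler0n ?sqr_half_le_bin2.
- exact: leq_trans hN.
- move=> i t /andP[t0 tk].
  by rewrite (age_block_scheduled hA) // t0 (leq_trans tk).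
Qed.
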